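(* Let $X$ be a compact $\ell_1$-convex subset of $\mathbb{R}^n$. Then for $0\le j\le k\le n$, \[ \int_{\mathrm{Graff}_{n,k}} V_j(X\cap A)\,dA=\binom{n+j-k}{j}V_{n+j-k}(X). \] In particular, for $0\le k\le n$, the set $\{A\in\mathrm{Graff}_{n,k}: X\cap A\neq\emptyset\}$ has measure $V_{n-k}(X)$.
   Context: A subset $X\subseteq\mathbb{R}^n$ is $\ell_1$-convex if any two of its points $x,x'$ are joined by a map $\gamma\colon[0,D]\to X$, $D=\sum_i|x_i-x'_i|$, with $\gamma(0)=x,\gamma(D)=x'$ and $\sum_i|\gamma_i(t)-\gamma_i(t')|=|t-t'|$. $G_{n,k}$ is the set of $k$-dimensional coordinate subspaces of $\mathbb{R}^n$ (spanned by $k$ standard basis vectors); $P^\perp$ is the orthogonal complement and $\pi_P$ orthogonal projection. $\mathrm{Graff}_{n,k}$ is the set of $k$-dimensional affine subspaces parallel to some element of $G_{n,k}$; each is uniquely $P+q$ with $P\in G_{n,k}$, $q\in P^\perp$, so $\mathrm{Graff}_{n,k}\cong\coprod_{P\in G_{n,k}}P^\perp$, and it carries the measure obtained by summing Lebesgue measure $\mathrm{Vol}_{n-k}$ on each $P^\perp$. The $i$th $\ell_1$-intrinsic volume of a compact $\ell_1$-convex set $Y$ lying in $\mathbb{R}^n$ is $V_i(Y)=\sum_{P\in G_{n,i}}\mathrm{Vol}_i(\pi_PY)$; for $Y\subseteq A$ with $A$ an affine coordinate-parallel subspace, $V_i(Y)$ is computed in $\mathbb{R}^n$ (this agrees with computing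 intrinsically in $A$). For sets $X\cap A$ not necessarily $\ell_1$-convex the integrand is understood via this same formula. *)

(* Points of R^n are functions 'I_n -> R
   (carrying the canonical product topology of MathComp-Analysis). *)
From mathcomp Require Import all_boot all_order all_algebra.
From mathcomp Require Import all_classical all_reals all_analysis.
Set Implicit Arguments. Unset Strict Implicit. Unset Printing Implicit Defensive.
Import Order.TTheory GRing.Theory Num.Theory.
Import numFieldNormedType.Exports.
Local Open Scope classical_set_scope.
Local Open Scope ring_scope.

Section Defs.
Variable R : realType.

Definition vcons (m : nat) (t : R) (y : 'I_m -> R) : 'I_m.+1 -> R :=
  fun i => match unlift ord0 i with None => t | Some j => y j end.

(* Iterated Lebesgue integral of a nonnegative extended-real function on R^m
   (integrating the first coordinate last).  For nonnegative Borel functions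
   this is the integral w.r.t. m-dimensional Lebesgue measure (Tonelli). *)
Fixpoint lint (m : nat) : (('I_m -> R) -> \bar R) -> \bar R :=
  match m with
  | 0 => fun f => f (fun _ => 0)
  | m'.+1 => fun f =>
      (\int[@lebesgue_measure R]_(t in setT) lint (fun y => f (vcons t y)))%E
  end.

(* The coordinate vector y : R^{#|T|} placed on the coordinates of T
   (listed increasingly via enum T), and 0 off T. *)
Definition embed (n : nat) (T : {set 'I_n}) (y : 'I_#|T| -> R) : 'I_n -> R :=
  fun i => odflt 0 (omap y (insub (index i (enum T)) : option 'I_#|T|)).

Definition setint (n : nat) (T : {set 'I_n}) (F : ('I_n -> R) -> \bar R) : \bar R :=
  @lint #|T| (fun y => F (@embed n T y)).

(* Vol_{#|S|} (pi_P Y), P the coordinate subspace spanned by the e_i, i in S. *)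
Definition projvol (n : nat) (S : {set 'I_n}) (Y : set ('I_n -> R)) : \bar R :=
  setint S (fun z =>
    (\1_[set z | exists2 x, Y x & forall i, i \in S -> x i = z i] z)%:E).

(* i-th l1-intrinsic volume: V_i(Y) = sum_{P in G_{n,i}} Vol_i(pi_P Y). *)
Definition l1vol (n : nat) (i : nat) (Y : set ('I_n -> R)) : \bar R :=
  (\sum_(S : {set 'I_n} | #|S| == i) projvol S Y)%E.

(* affine coordinate subspace P + q, P spanned by e_i (i in S), q in P^perp *)
Definition affsub (n : nat) (S : {set 'I_n}) (q : 'I_n -> R) : set ('I_n -> R) :=
  [set x | forall i, i \notin S -> x i = q i].

(* integral over Graff_{n,k} = coprod_{P in G_{n,k}} P^perp *)
Definition graff_int (n k : nat) (F : set ('I_n -> R) -> \bar R) : \bar R :=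
  (\sum_(S : {set 'I_n} | #|S| == k) setint (~: S) (fun q => F (affsub S q)))%E.

Definition l1dist (n : nat) (x y : 'I_n -> R) : R := \sum_i `|x i - y i|.

Definition l1_convex (n : nat) (X : set ('I_n -> R)) : Prop :=
  forall x x', X x -> X x' ->
    exists gamma : R -> ('I_n -> R),
      [/\ gamma 0 = x, gamma (l1dist x x') = x',
          (forall t, 0 <= t <= l1dist x x' -> X (gamma t)) &
          (forall t t', 0 <= t <= l1dist x x' -> 0 <= t' <= l1dist x x' ->
             l1dist (gamma t) (gamma t') = `|t - t'|)].

End Defs.

(* Fix coordinate planes P of dimension k and P' of dimension j.  If P' is
   not contained in P, the projection onto P' of a slice X `&` (P + q) lies in
   a hyperplane of P' and is null.  If P' is contained in P, that projection
   is the fibre over q of the projection of X onto P^perp + P', so by Fubini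
   the integral over q in P^perp is Vol_{n-k+j} of this projection.  Summing
   over the pairs (P, P'), each coordinate plane Q of dimension n+j-k arises
   'C(n+j-k, j) times, once for each choice of P^perp among the subsets of Q
   of size n-k.  The case j = 0 is the second claim. *)

From mathcomp Require Import all_boot all_order all_algebra.
From mathcomp Require Import all_classical all_reals all_analysis.
From mathcomp Require Import measurable_realfun lra zify.
Set Implicit Arguments.
Unset Strict Implicit.
Unset Printing Implicit Defensive.
Import Order.TTheory GRing.Theory Num.Theory.
Import numFieldNormedType.Exports.
Local Open Scope ring_scope.

Section SubsetPairs.
Variable I : finType.

Lemma card_setC_draws (T : {set I}) k : (k <= #|I|)%N ->
  #|[set S : {set I} | (#|S| == k) && (~: S \subset T)]| = 'C(#|T|, #|I| - k).
Proof.
move=> kI; rewrite -cards_draws -(card_imset _ (@finset.setC_inj I)).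
apply: eq_card => A; rewrite inE; apply/imsetP/andP => [[B]|[sAT /eqP cA]].
  rewrite inE => /andP[/eqP cB sBT] ->; split=> //.
  by rewrite -(cardsC B) cB addKn.
exists (~: A); last by rewrite finset.setCK.
by rewrite inE finset.setCK sAT andbT; apply/eqP; have := cardsC A; lia.
Qed.

Lemma sum_subsets_within (M : nmodType) (f : {set I} -> M) (S : {set I}) j :
  \sum_(S' : {set I} | #|S'| == j)
     (if S' \subset S then f (~: S :|: S') else 0) =
  \sum_(T : {set I} | (#|T| == #|~: S| + j)%N && (~: S \subset T)) f T.
Proof.
rewrite -big_mkcondr.
rewrite [RHS](reindex_onto (fun S' => ~: S :|: S') (fun T => T :&: S));
  last first.
  move=> T /andP[_ sST]; apply/setP => i; rewrite !inE.
  case: (boolP (i \in S)) => iS; rewrite ?andbT ?andbF //=.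
  by apply/esym/(fintype.subsetP sST); rewrite inE.
apply: eq_bigl => S'.
rewrite finset.subsetUl andbT finset.setIUl [~: S :&: S]finset.setIC.
rewrite finset.setICr finset.set0U.
have [sS'S|nsS'S] := boolP (S' \subset S); last first.
  rewrite andbF; apply/esym/negP => /andP[_ /eqP E].
  by rewrite -E finset.subsetIr in nsS'S.
rewrite (finset.setIidPl sS'S) eqxx !andbT cardsU.
have -> : ~: S :&: S' = finset.set0.
  apply/setP => i; rewrite !inE.
  by apply/negP => /andP[/negP + /(fintype.subsetP sS'S)].
by rewrite cards0 subn0 eqn_add2l.
Qed.

Lemma sum_subset_pairs (M : nmodType) (f : {set I} -> M) j k : (k <= #|I|)%N ->
  \sum_(S : {set I} | #|S| == k) \sum_(S' : {set I} | #|S'| == j)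
     (if S' \subset S then f (~: S :|: S') else 0) =
  (\sum_(T : {set I} | #|T| == (#|I| + j - k)%N) f T) *+ 'C(#|I| + j - k, j).
Proof.
move=> kI.
rewrite (eq_bigr (fun S => \sum_(T : {set I} |
    (#|T| == (#|I| + j - k)%N) && (~: S \subset T)) f T)); last first.
  move=> S /eqP cS; rewrite sum_subsets_within; apply: eq_bigl => T.
  have := cardsC S; rewrite cS => cSC; congr (_ && _); apply/eqP/eqP; lia.
rewrite (exchange_big_dep (fun T : {set I} => #|T| == (#|I| + j - k)%N)) /=;
  last by move=> S T _ /andP[].
rewrite -sumrMnl; apply: eq_bigr => T /eqP cT.
rewrite (eq_bigl
  (fun S => S \in [set S : {set I} | (#|S| == k) && (~: S \subset T)]));
  last by move=> S; rewrite inE cT eqxx.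
rewrite sumr_const card_setC_draws // cT; congr (_ *+ _).
rewrite -bin_sub; last exact: leq_sub2r (leq_addr _ _).
by congr binomial; rewrite -addnBAC // addKn.
Qed.

End SubsetPairs.

Local Open Scope classical_set_scope.

Section CoordinateIntegrals.
Variables (R : realType) (n : nat).
Local Notation V := ('I_n -> R).
Local Notation lebesgue := (@lebesgue_measure R).

Definition setcoord (w : V) (i : 'I_n) (t : R) : V :=
  fun j => if j == i then t else w j.

Fixpoint coord_int (s : seq 'I_n) (F : V -> \bar R) (w : V) : \bar R :=
  match s with
  | [::] => F w
  | i :: s' => (\int[lebesgue]_t coord_int s' F (setcoord w i t))%E
  end.

(* There is no sigma-algebra on [V]; a function on [V] is called measurable
   when it is measurable along every measurable parametrization of [V]. *)
Definition coord_measurable (F : V -> \bar R) : Prop :=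
  forall d (Q : measurableType d) (phi : 'I_n -> Q -> R),
    (forall i, measurable_fun setT (phi i)) ->
    measurable_fun (U := \bar R) setT (fun q => F (fun i => phi i q)).

Lemma coord_measurable0 : coord_measurable (fun _ => 0%E).
Proof. by move=> d Q phi _; exact: measurable_cst. Qed.

Lemma measurable_setcoord F w i : coord_measurable F ->
  measurable_fun (U := \bar R) (@setT (measurableTypeR R))
    (fun t => F (setcoord w i t)).
Proof.
move=> mF; apply: (mF _ _ (fun j t => if j == i then t else w j)) => j.
by case: (j == i) => //; exact: measurable_cst.
Qed.

Lemma coord_int_cat s1 s2 F w :
  coord_int (s1 ++ s2) F w = coord_int s1 (coord_int s2 F) w.
Proof. by elim: s1 w => //= i s1 IH w; apply: eq_integral => t _. Qed.

Lemma eq_coord_int s F F' w w' :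
  (forall u, (forall i, i \notin s -> u i = w i) ->
     F u = F' (fun i => if i \in s then u i else w' i)) ->
  coord_int s F w = coord_int s F' w'.
Proof.
elim: s w w' => [|a s IH] w w' FF' /=.
  by rewrite (FF' w) //; congr F'; apply/funext.
apply: eq_integral => t _; apply: IH => u uw; rewrite FF'.
  congr F'; apply/funext => i; rewrite inE /setcoord.
  have [iS|iS] := boolP (i \in s); first by rewrite orbT.
  by rewrite orbF; case: eqP iS => // -> aS; rewrite uw // /setcoord eqxx.
move=> i; rewrite inE negb_or => /andP[ia iS].
by rewrite uw // /setcoord (negbTE ia).
Qed.

Lemma coord_int0 s w : coord_int s (fun _ => 0%E) w = 0%E.
Proof. by elim: s w => //= a s IH w; apply: integral0_eq => t _. Qed.

Lemma coord_int_eq0 s F w :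
  (forall u, (forall i, i \notin s -> u i = w i) -> F u = 0%E) ->
  coord_int s F w = 0%E.
Proof.
by move=> F0; rewrite -(coord_int0 s w); apply: eq_coord_int => u /F0.
Qed.

Section NonNegative.
Variable F : V -> \bar R.
Hypothesis F_ge0 : forall w, (0 <= F w)%E.

Lemma coord_int_ge0 s w : (0 <= coord_int s F w)%E.
Proof.
elim: s w => //= i s IH w.
by apply: integral_ge0 => t _; exact: IH.
Qed.

Hypothesis mF : coord_measurable F.

Lemma coord_measurable_int s : coord_measurable (coord_int s F).
Proof.
elim: s => //= i s IH d Q phi mphi.
pose phi' j (p : Q * R) := if j == i then p.2 else phi j p.1.
have mphi' j : measurable_fun setT (phi' j).
  rewrite /phi'; case: (j == i); first exact: measurable_snd.
  exact: measurableT_comp (mphi j) measurable_fst.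
exact: (measurable_fun_fubini_tonelli_F (m2 := lebesgue) _ (IH _ _ _ mphi')
  (fun _ => coord_int_ge0 _ _)).
Qed.

Lemma coord_int_swap i j s w :
  coord_int [:: i, j & s] F w = coord_int [:: j, i & s] F w.
Proof.
have [<-//|ij] := eqVneq i j.
pose phi k (p : R * R) := if k == j then p.2 else if k == i then p.1 else w k.
have mphi k : measurable_fun setT (phi k).
  rewrite /phi; case: (k == j); first exact: measurable_snd.
  by case: (k == i); [exact: measurable_fst | exact: measurable_cst].
have := fubini_tonelli (m1 := lebesgue) (m2 := lebesgue) _
  (coord_measurable_int s mphi) (fun _ => coord_int_ge0 _ _).
rewrite /= => E; transitivity (\int[lebesgue]_x \int[lebesgue]_y
   coord_int s F (fun k => phi k (x, y)))%E; first by [].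
rewrite E; apply: eq_integral => y _; apply: eq_integral => x _.
congr coord_int; apply/funext => k; rewrite /phi /setcoord.
by have [->|kj] := eqVneq k j; [rewrite eq_sym (negbTE ij) | case: (k == i)].
Qed.

Lemma coord_int_bubble a s1 s2 w :
  coord_int (s1 ++ a :: s2) F w = coord_int (a :: s1 ++ s2) F w.
Proof.
elim: s1 w => [//|b s1 IH] w.
rewrite -coord_int_swap /=; apply: eq_integral => t _; exact: IH.
Qed.

Lemma coord_int_perm s1 s2 w :
  perm_eq s1 s2 -> coord_int s1 F w = coord_int s2 F w.
Proof.
elim: s1 s2 w => [|a s1 IH] s2 w; first by move=> /perm_size/esym/size0nil ->.
move=> pe; have aS2 : a \in s2 by rewrite -(perm_mem pe) mem_head.
move: pe; case/splitPr: s2 / aS2 => s2a s2b pe; rewrite coord_int_bubble /=.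
apply: eq_integral => t _; apply: IH.
by rewrite -(perm_cons a) (perm_trans pe) // -cat1s perm_catCA.
Qed.

Lemma coord_int_hyperplane i c s w : uniq s -> i \in s ->
  (forall u, u i != c -> F u = 0%E) -> coord_int s F w = 0%E.
Proof.
elim: s w => // a s IH w /= /andP[aS us]; rewrite inE.
have [eia _|ia /= iS] := eqVneq i a => F0; last first.
  by apply: integral0_eq => t _; exact: IH.
subst a; rewrite -(integral_setD1 (r := c)).
- apply: integral0_eq => t [_ /eqP tc]; apply: coord_int_eq0 => u ut.
  by apply: F0; rewrite ut // /setcoord eqxx.
- exact: measurableD.
- have := measurable_setcoord w i (coord_measurable_int s).
  by apply: measurable_funS.
Qed.

End NonNegative.

Lemma coord_int_sum (I : Type) (r : seq I) (P : pred I) (G : I -> V -> \bar R)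
    s w :
  (forall k, coord_measurable (G k)) -> (forall k u, 0 <= G k u)%E ->
  coord_int s (fun u => \sum_(k <- r | P k) G k u)%E w =
  (\sum_(k <- r | P k) coord_int s (G k) w)%E.
Proof.
move=> mG G0; rewrite -big_filter.
have -> : (fun u => \sum_(k <- r | P k) G k u)%E =
          (fun u => \sum_(k <- seq.filter P r) G k u)%E.
  by apply/funext => u; rewrite big_filter.
elim: s w => [|a s IH] w //=.
under eq_integral do rewrite IH.
apply: ge0_integral_sum => //= k.
  exact: measurable_setcoord w a (coord_measurable_int (G0 k) (mG k) s).
by move=> t _; exact: coord_int_ge0.
Qed.

End CoordinateIntegrals.

Section CoordinateEmbedding.
Variables (R : realType) (n : nat).
Local Notation V := ('I_n -> R).

Definition embed_seq m (s : seq 'I_n) (y : 'I_m -> R) (w : V) : V :=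
  fun i => odflt (w i) (omap y (insub (index i s))).

Lemma embed_seq_cons s a t (y : 'I_(size s) -> R) w : a \notin s ->
  embed_seq (a :: s) (vcons t y) w = embed_seq s y (setcoord w a t).
Proof.
move=> aS; apply/funext => i; rewrite /embed_seq /= /setcoord.
have [<-|ai] := eqVneq a i.
  rewrite insubT //= (memNindex aS) insubF ?ltnn //=.
  rewrite /vcons [X in unlift _ X](_ : _ = ord0) ?unlift_none //.
  exact: val_inj.
have [lt_is|le_si] := ltnP (index i s) (size s).
  rewrite insubT ?ltnS //= insubT /= /vcons.
  rewrite [X in unlift _ X](_ : _ = lift ord0 (Ordinal lt_is)) ?liftK //.
  exact: val_inj.
by rewrite !insubF // ltnNge ?ltnS le_si.
Qed.

Lemma lint_embed_seq s (F : V -> \bar R) w : uniq s ->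
  lint (fun y : 'I_(size s) -> R => F (embed_seq s y w)) = coord_int s F w.
Proof.
elim: s w => [|a s IH] w /=.
  by move=> _; congr F; apply/funext => i; rewrite /embed_seq insubF.
move=> /andP[aS us]; apply: eq_integral => t _.
by rewrite -(IH _ us); congr lint; apply/funext => y; rewrite embed_seq_cons.
Qed.

Lemma setint_coord_int (T : {set 'I_n}) (F : V -> \bar R) :
  setint T F = coord_int (enum T) F (fun _ => 0).
Proof.
rewrite /setint -lint_embed_seq ?enum_uniq // /embed /embed_seq.
have := cardE T; move: (enum T) #|T| => s m ->.
by congr lint; apply/funext => y; congr F; apply/funext => i; case: insub.
Qed.

End CoordinateEmbedding.

Lemma cvg_ptws (I : Type) (T : topologicalType) (Y : Type) (F : set_system Y)
    {FF : Filter F} (f : Y -> I -> T) (l : I -> T) :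
  (forall i, (fun a => f a i) @ F --> l i) -> f @ F --> (l : {ptws I -> T}).
Proof.
move=> fl; apply/(@cvg_sup _ I (fun i =>
  Topological.class (initial_topology (fun g : I -> T => g i)))) => i.
apply/(@cvg_image _ _ (fun g : I -> T => g i)).
  by apply/seteqP; split => // r _; exists (fun _ => r).
move=> B /fl /= fB; exists [set g : I -> T | B (g i)] => //.
apply/seteqP; split; first by move=> _ [g Bg <-].
by move=> r Br; exists (fun _ => r).
Qed.

Section ClosedSets.
Variables (R : realType) (n : nat).
Local Notation V := ('I_n -> R).
Local Notation PT := {ptws 'I_n -> R}.

Lemma closed_coordwise_approx (C : set V) (x : V) : @closed PT C ->
  (forall m : nat, exists y, C y /\ forall i, `|x i - y i| < m.+1%:R^-1) -> C x.
Proof.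
move=> cC /choice[y Cy]; apply: (@closed_cvg _ PT \oo _ y C cC).
  by apply: nearW => m; case: (Cy m).
apply: cvg_ptws => i; apply/cvgrPdist_lt => e e0; near=> m.
apply: lt_trans (proj2 (Cy m) i) _; near: m.
exact: (@near_infty_natSinv_lt R (PosNum e0)).
Unshelve. all: end_near.
Qed.

Definition grid_cell (m : nat) (c : {ffun 'I_n -> int}) (v : V) : Prop :=
  forall i, (c i)%:~R <= m.+1%:R * v i < (c i + 1)%:~R.

Lemma grid_cell_floor m (v : V) :
  grid_cell m [ffun i => Num.floor (m.+1%:R * v i)] v.
Proof. by move=> i; rewrite ffunE floor_itv. Qed.

Lemma grid_cell_dist m c v y i : grid_cell m c v -> grid_cell m c y ->
  `|v i - y i| < m.+1%:R^-1.
Proof.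
move=> /(_ i) /andP[cv vc] /(_ i) /andP[cy yc].
have m0 : (0 : R) < m.+1%:R by rewrite ltr0n.
rewrite -[_^-1]mulr1 ltr_pdivlMl // -[X in X * _]ger0_norm ?ltW // -normrM.
by rewrite mulrBr ltr_norml; move: cv vc cy yc; rewrite intrD => *; lra.
Qed.

Lemma measurable_grid_cell d (Q : measurableType d) (phi : 'I_n -> Q -> R) m c :
  (forall i, measurable_fun setT (phi i)) ->
  measurable [set q | grid_cell m c (fun i => phi i q)].
Proof.
move=> mphi.
have -> : [set q | grid_cell m c (fun i => phi i q)] =
  \bigcap_(i in [set: 'I_n])
    ((fun q => m.+1%:R * phi i q) @^-1` [set` `[(c i)%:~R, (c i + 1)%:~R[%R]).
  apply/seteqP; split => q /= cq i; last by have := cq i I; rewrite /= in_itv.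
  by move=> _; rewrite /= in_itv; exact: cq.
apply: fin_bigcap_measurable; first exact: finite_finset.
move=> i _; rewrite -[X in measurable X]setTI.
by apply: measurable_funM => //; exact: measurable_cst.
Qed.

(* A point lies in a closed set [C] iff, for every mesh, its grid cell meets
   [C]: this writes [C] as a countable intersection of countable unions of
   cells, each of which has a measurable preimage. *)
Lemma coord_measurable_indic_closed (C : set V) :
  @closed PT C -> coord_measurable (fun w => (\1_C w)%:E).
Proof.
move=> cC d Q phi mphi.
pose cells m k : set Q := if unpickle k is Some c then
  [set q | (exists y, C y /\ grid_cell m c y) /\
           grid_cell m c (fun i => phi i q)]
  else set0.
have -> : (fun q => (\1_C (fun i => phi i q))%:E) =
    EFin \o (\1_(\bigcap_m \bigcup_k cells m k) : Q -> R).
  apply/funext => q; rewrite /= /indic; congr ((_ : bool)%:R%:E).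
  apply/idP/idP => /set_mem Cq; apply/mem_set.
    move=> m _; exists (pickle [ffun i => Num.floor (m.+1%:R * phi i q)]) => //.
    rewrite /cells pickleK; split; last exact: grid_cell_floor.
    by exists (fun i => phi i q); split => //; exact: grid_cell_floor.
  apply: (closed_coordwise_approx cC) => m.
  have [k _] := Cq m I; rewrite /cells; case: unpickle => // c [[y [Cy yc]] qc].
  by exists y; split => // i; exact: grid_cell_dist qc yc.
apply/measurable_EFinP/measurable_indic.
apply: bigcapT_measurable => m; apply: bigcupT_measurable => k.
rewrite /cells; case: unpickle => // c.
have [[y Cyc]|noy] := pselect (exists y, C y /\ grid_cell m c y).
  rewrite [X in measurable X](_ : _ = [set q | grid_cell m c (phi^~ q)]).
    exact: measurable_grid_cell.
  by apply/seteqP; split => q /= => [[]|qc]//; split => //; exists y.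
rewrite [X in measurable X](_ : _ = set0) //.
by apply/seteqP; split => q //= [].
Qed.
End ClosedSets.

Section Cylinders.
Variables (R : realType) (n : nat).
Local Notation V := ('I_n -> R).
Local Notation PT := {ptws 'I_n -> R}.

Definition coord_proj (T : {set 'I_n}) (w : V) : V :=
  fun i => if i \in T then w i else 0.

Lemma continuous_coord_proj T : continuous (coord_proj T : PT -> PT).
Proof.
move=> w; apply: (@cvg_ptws _ _ _ (nbhs (w : PT))) => i; rewrite /coord_proj.
case: (i \in T); last exact: cvg_cst.
exact: (@proj_continuous _ (fun _ => R) i w).
Qed.

Definition coord_cylinder (T : {set 'I_n}) (X : set V) : set V :=
  [set w | exists2 x, X x & forall i, i \in T -> x i = w i].

Lemma coord_cylinderE T X :
  coord_cylinder T X = coord_proj T @^-1` (coord_proj T @` X).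
Proof.
apply/seteqP; split => w [x Xx xw]; exists x => //.
  by apply/funext => i; rewrite /coord_proj; case: ifP => // /xw.
by move=> i iT; have := congr1 (fun f => f i) xw; rewrite /coord_proj iT.
Qed.

Lemma closed_coord_cylinder T X :
  @compact PT X -> @closed PT (coord_cylinder T X).
Proof.
move=> cX; rewrite coord_cylinderE.
apply: (@preimage_closed PT PT) => [w _|]; first exact: continuous_coord_proj.
apply: (@compact_closed PT).
  exact: (@hausdorff_product _ (fun _ => R) (fun _ => @Rhausdorff R)).
apply: (@continuous_compact PT PT) => //.
exact/continuous_subspaceT/continuous_coord_proj.
Qed.

Lemma affsub_cylinder (S : {set 'I_n}) (q : V) :
  affsub S q = coord_cylinder (~: S) [set q].
Proof.
apply/seteqP; split => x /=.
  by move=> xq; exists q; [|move=> i; rewrite inE => /xq].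
by move=> [_ -> qx] i iS; rewrite qx // inE.
Qed.

Lemma compact_setI_affsub (X : set V) S q :
  @compact PT X -> @compact PT (X `&` affsub S q).
Proof.
move=> cX; apply: compact_closedI => //; rewrite affsub_cylinder.
exact/closed_coord_cylinder/compact_set1.
Qed.
End Cylinders.

Section Slicing.
Variables (R : realType) (n : nat).
Local Notation V := ('I_n -> R).
Local Notation PT := {ptws 'I_n -> R}.

Definition cylinder_indic (T : {set 'I_n}) (X : set V) (w : V) : \bar R :=
  (\1_(coord_cylinder T X) w)%:E.

Lemma cylinder_indic_ge0 T X w : (0 <= cylinder_indic T X w)%E.
Proof. by rewrite lee_fin indicE. Qed.

Lemma coord_measurable_cylinder_indic T X :
  @compact PT X -> coord_measurable (cylinder_indic T X).
Proof.
by move=> cX; exact/coord_measurable_indic_closed/closed_coord_cylinder.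
Qed.

Lemma projvol_coord_int S (Y : set V) :
  projvol S Y = coord_int (enum S) (cylinder_indic S Y) (fun _ => 0).
Proof. by rewrite /projvol setint_coord_int. Qed.

Lemma projvol_setI_affsub (X : set V) (S S' : {set 'I_n}) q : S' \subset S ->
  projvol S' (X `&` affsub S q) =
  coord_int (enum S') (cylinder_indic (~: S :|: S') X) q.
Proof.
move=> sS'S; rewrite projvol_coord_int; apply: eq_coord_int => u _.
rewrite /cylinder_indic; congr ((_ : bool)%:R%:E); apply/idP/idP => /set_mem.
  move=> [x [Xx xq] xu]; apply/mem_set; exists x => // i.
  rewrite !inE mem_enum => /orP[iS|iS']; last by rewrite iS' xu.
  have iS' : i \notin S' := contra (fintype.subsetP sS'S i) iS.
  by rewrite (negbTE iS') xq.
move=> [x Xx xu]; apply/mem_set; exists x => [|i iS'].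
  split=> // i iS; have iS' : i \notin S' := contra (fintype.subsetP sS'S i) iS.
  by rewrite xu ?inE ?iS //= mem_enum (negbTE iS').
by rewrite xu ?inE ?iS' ?orbT // mem_enum iS'.
Qed.

Lemma projvol_setI_affsub_eq0 (X : set V) (S S' : {set 'I_n}) q :
  @compact PT X -> ~~ (S' \subset S) -> projvol S' (X `&` affsub S q) = 0%E.
Proof.
move=> cX /fintype.subsetPn[i iS' iS]; rewrite projvol_coord_int.
apply: (@coord_int_hyperplane _ _ _ _ _ i (q i)).
- by move=> w; exact: cylinder_indic_ge0.
- exact/coord_measurable_cylinder_indic/compact_setI_affsub.
- exact: enum_uniq.
- by rewrite mem_enum.
move=> u /eqP uq; rewrite /cylinder_indic /indic.
case: (boolP (u \in _)) => // /set_mem[x [_ xq] xu].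
by rewrite -(xu i iS') xq in uq.
Qed.

Lemma setint_l1vol_setI_affsub (X : set V) (S : {set 'I_n}) j : @compact PT X ->
  setint (~: S) (fun q => l1vol j (X `&` affsub S q)) =
  (\sum_(S' : {set 'I_n} | #|S'| == j)
     (if S' \subset S then projvol (~: S :|: S') X else 0))%E.
Proof.
move=> cX; rewrite setint_coord_int.
pose slice (S' : {set 'I_n}) (q : V) : \bar R :=
  if S' \subset S then coord_int (enum S') (cylinder_indic (~: S :|: S') X) q
  else 0%E.
have -> : (fun q : V => l1vol j (X `&` affsub S q)) =
    (fun q : V => \sum_(S' : {set 'I_n} | #|S'| == j) slice S' q)%E.
  apply/funext => q; apply: eq_bigr => S' _; rewrite /slice.
  case: ifP => [|/negbT]; first exact: projvol_setI_affsub.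
  exact: projvol_setI_affsub_eq0.
have slice_ge0 S' q : (0 <= slice S' q)%E.
  rewrite /slice; case: ifP => // _.
  by apply: coord_int_ge0 => w; exact: cylinder_indic_ge0.
have mslice S' : coord_measurable (slice S').
  rewrite /slice; case: (S' \subset S); last exact: coord_measurable0.
  apply: coord_measurable_int; first by move=> w; exact: cylinder_indic_ge0.
  exact: coord_measurable_cylinder_indic.
rewrite coord_int_sum //; apply: eq_bigr => S' _; rewrite /slice.
case: ifP => sS'S; last exact: coord_int0.
rewrite -coord_int_cat projvol_coord_int.
apply: coord_int_perm; [exact: cylinder_indic_ge0 |
  exact: coord_measurable_cylinder_indic |].
apply: uniq_perm; rewrite ?cat_uniq ?enum_uniq ?andbT //=.
  apply/hasPn => i; rewrite !mem_enum inE negbK; exact: (fintype.subsetP sS'S).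
by move=> i; rewrite mem_cat !mem_enum !inE.
Qed.

End Slicing.

Lemma graff_int_l1vol (R : realType) n (X : set ('I_n -> R)) j k :
  @compact {ptws 'I_n -> R} X -> (k <= n)%N ->
  graff_int k (fun A => l1vol j (X `&` A)) =
  ('C(n + j - k, j)%:R%:E * l1vol (n + j - k) X)%E.
Proof.
move=> cX kn; rewrite /graff_int.
under eq_bigr do rewrite setint_l1vol_setI_affsub //.
have := sum_subset_pairs (fun T => projvol T X) j; rewrite card_ord => -> //.
by rewrite mule_natl.
Qed.

Lemma l1vol0 (R : realType) n (Y : set ('I_n -> R)) :
  l1vol 0 Y = (\1_[set Z : set ('I_n -> R) | Z !=set0] Y)%:E.
Proof.
rewrite /l1vol (big_pred1 finset.set0) => [|S]; last by rewrite cards_eq0.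
rewrite projvol_coord_int enum_set0 /= /cylinder_indic /indic.
congr ((_ : bool)%:R%:E); apply/idP/idP => /set_mem[x Yx].
  by move=> _; apply/mem_set; exists x.
by apply/mem_set; exists x => // i; rewrite inE.
Qed.

Lemma graff_int_meets (R : realType) n (X : set ('I_n -> R)) k :
  @compact {ptws 'I_n -> R} X -> (k <= n)%N ->
  graff_int k (fun A => (\1_[set A' | X `&` A' !=set0] A)%:E) = l1vol (n - k) X.
Proof.
move=> cX kn.
have -> : (fun A => (\1_[set A' | X `&` A' !=set0] A)%:E) =
    (fun A => l1vol 0 (X `&` A)) by apply/funext => A; rewrite l1vol0.
by rewrite graff_int_l1vol // addn0 bin0 mul1e.
Qed.

Theorem theorem7p1 (R : realType) (n : nat) (X : set ('I_n -> R)) :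
  @compact (prod_topology (fun _ : 'I_n => R)) X -> l1_convex X ->
  (forall j k : nat, (j <= k <= n)%N ->
     graff_int k (fun A => l1vol j (X `&` A)) =
     (('C(n + j - k, j))%:R%:E * l1vol (n + j - k) X)%E) /\
  (forall k : nat, (k <= n)%N ->
     graff_int k (fun A => (\1_[set A' : set ('I_n -> R) | X `&` A' !=set0] A)%:E) =
     l1vol (n - k) X).
Proof.
move=> cX _; split => [j k /andP[_ kn]|k kn].
  exact: graff_int_l1vol.
exact: graff_int_meets.
Qed.
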